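(* Let $\mathcal M=(M,<,+,0,\ldots)$ be a definably complete locally o-minimal expansion of an ordered group. Let $(G,d_G)$ be a definably compact definable metric group and $(X,d_X)$ a definable metric space, with $G$ acting on $X$ by a definable continuous left action. Then for every $G$-invariant definable closed subset $A$ of $X$ there is a definable continuous $G$-invariant function $f:X\to M$ with $f^{-1}(0)=A$.
   Context: ''Definable'' means definable in $\mathcal M$ with parameters. $\mathcal M$ is an expansion of an ordered group with dense order without endpoints; locally o-minimal: for every definable $Y\subseteq M$ and $a\in M$ there is an open interval $I\ni a$ with $Y\cap I$ a finite union of points and open intervals; definably complete: every definable subset of $M$ has sup and inf in $M\cup\{\pm\infty\}$. A definable metric space $(X,d_X)$ is a definable set with a definable $d_X:X\times X\to\{a\ge0\}$ satisfying $d_X(x,y)=0\iff x=y$, symmetry and triangle inequality, topologized by the open balls. A definable metric group is a definable metric space whose underlying set is a definable group with multiplication and inversion continuous. It is definably compact if every definable filtered family (any two members contain a common member) of nonempty closed subsets has nonempty intersection. $f$ is $G$-invariant if $f(gx)=f(x)$ for all $g\in G$, $x\in X$. *)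

From Stdlib Require List.
From mathcomp Require Import all_boot.
Set Implicit Arguments.
Unset Strict Implicit.
Unset Printing Implicit Defensive.

Definition tfst (M : Type) (n m : nat) (z : 'I_(n + m) -> M) : 'I_n -> M :=
  fun i => z (lshift m i).
Definition tsnd (M : Type) (n m : nat) (z : 'I_(n + m) -> M) : 'I_m -> M :=
  fun i => z (rshift n i).
Definition tcat (M : Type) (n m : nat) (x : 'I_n -> M) (y : 'I_m -> M)
  : 'I_(n + m) -> M :=
  fun i => match split i with inl j => x j | inr k => y k end.
Definition tconst1 (M : Type) (a : M) : 'I_1 -> M := fun _ => a.

(* The definable sets (with parameters) are given as a "structure" on M in  *)
(* the sense of van den Dries (Tame topology, Ch. 1 (2.1)): a family of     *)
(* Boolean algebras S_n of subsets of M^n, closed under products with M,    *)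
(* containing diagonals, closed under projections; it contains the graphs   *)
(* of <, + and all singletons {a} (parameters).                              *)

Record dclomStructure := DclomStructure {
  carrier :> Type;
  lt : carrier -> carrier -> Prop;
  add : carrier -> carrier -> carrier;
  zero : carrier;
  neg : carrier -> carrier;
  defn : forall n : nat, (('I_n -> carrier) -> Prop) -> Prop;
  addA : forall x y z, add x (add y z) = add (add x y) z;
  add0r : forall x, add zero x = x;
  addr0 : forall x, add x zero = x;
  addNr : forall x, add (neg x) x = zero;
  addrN : forall x, add x (neg x) = zero;
  lt_irr : forall x, ~ lt x x;
  lt_trans : forall x y z, lt x y -> lt y z -> lt x z;
  lt_total : forall x y, lt x y \/ x = y \/ lt y x;
  lt_addl : forall a b c, lt a b -> lt (add c a) (add c b);
  lt_addr : forall a b c, lt a b -> lt (add a c) (add b c);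
  lt_dense : forall x y, lt x y -> exists z, lt x z /\ lt z y;
  lt_noendpoints : forall x, exists y z, lt y x /\ lt x z;
  defn_full : forall n, defn (fun _ : 'I_n -> carrier => True);
  defn_compl : forall n (A : ('I_n -> carrier) -> Prop), defn A -> defn (fun x => ~ A x);
  defn_union : forall n (A B : ('I_n -> carrier) -> Prop), defn A -> defn B -> defn (fun x => A x \/ B x);
  defn_prodr : forall n (A : ('I_n -> carrier) -> Prop),
      defn A -> defn (fun z : 'I_(n + 1) -> carrier => A (tfst z));
  defn_prodl : forall n (A : ('I_n -> carrier) -> Prop),
      defn A -> defn (fun z : 'I_(1 + n) -> carrier => A (tsnd z));
  defn_diag : forall n (i j : 'I_n), defn (fun x => x i = x j);
  defn_proj : forall n (A : ('I_(n + 1) -> carrier) -> Prop), defn A ->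
      defn (fun x : 'I_n -> carrier => exists a : carrier, A (tcat x (tconst1 a)));
  defn_lt : defn (fun x : 'I_2 -> carrier => lt (x (inord 0)) (x (inord 1)));
  defn_add : defn (fun x : 'I_3 -> carrier => x (inord 2) = add (x (inord 0)) (x (inord 1)));
  defn_const : forall a : carrier, defn (fun x : 'I_1 -> carrier => x ord0 = a);
  loc_omin : forall (Y : carrier -> Prop) (a : carrier),
      defn (fun x : 'I_1 -> carrier => Y (x ord0)) ->
      exists b c (pts : seq carrier) (ivs : seq (carrier * carrier)),
        lt b a /\ lt a c /\
        forall x, lt b x -> lt x c ->
          (Y x <-> (List.In x pts \/
                    exists p q, List.In (p, q) ivs /\ lt p x /\ lt x q));
  def_sup : forall (Y : carrier -> Prop),
      defn (fun x : 'I_1 -> carrier => Y (x ord0)) -> (exists y, Y y) ->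
      (exists b, forall y, Y y -> ~ lt b y) ->
      exists s, (forall y, Y y -> ~ lt s y) /\
                (forall b, (forall y, Y y -> ~ lt b y) -> ~ lt b s);
  def_inf : forall (Y : carrier -> Prop),
      defn (fun x : 'I_1 -> carrier => Y (x ord0)) -> (exists y, Y y) ->
      (exists b, forall y, Y y -> ~ lt y b) ->
      exists s, (forall y, Y y -> ~ lt y s) /\
                (forall b, (forall y, Y y -> ~ lt y b) -> ~ lt s b)
}.

Section Definable.
Variable R : dclomStructure.
Local Notation M := (carrier R).

Definition def_map (n k : nat) (A : ('I_n -> M) -> Prop)
    (f : ('I_n -> M) -> ('I_k -> M)) : Prop :=
  defn (fun z : 'I_(n + k) -> M => A (tfst z) /\ tsnd z = f (tfst z)).

Definition def_fun (n : nat) (A : ('I_n -> M) -> Prop) (f : ('I_n -> M) -> M) :=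
  def_map A (fun x => tconst1 (f x)).

Definition pos (e : M) := lt (zero R) e.

Record defMetricSpace := DefMetricSpace {
  msdim : nat;
  mspts : ('I_msdim -> M) -> Prop;
  msdist : ('I_msdim -> M) -> ('I_msdim -> M) -> M;
  mspts_def : defn mspts;
  msdist_def : def_fun (fun w : 'I_(msdim + msdim) -> M =>
                           mspts (tfst w) /\ mspts (tsnd w))
                       (fun w => msdist (tfst w) (tsnd w));
  msdist_ge0 : forall x y, mspts x -> mspts y -> ~ lt (msdist x y) (zero R);
  msdist_eq0 : forall x y, mspts x -> mspts y -> (msdist x y = zero R <-> x = y);
  msdist_sym : forall x y, mspts x -> mspts y -> msdist x y = msdist y x;
  msdist_tri : forall x y z, mspts x -> mspts y -> mspts z ->
      ~ lt (add (msdist x y) (msdist y z)) (msdist x z)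
}.

Arguments msdim : clear implicits.
Arguments mspts : clear implicits.
Arguments msdist : clear implicits.

Definition closed_in (X : defMetricSpace) (A : ('I_(msdim X) -> M) -> Prop) :=
  (forall x, A x -> mspts X x) /\
  forall x, mspts X x -> ~ A x ->
    exists e, pos e /\ forall y, mspts X y -> lt (msdist X x y) e -> ~ A y.

Definition continuous_on (X : defMetricSpace) (f : ('I_(msdim X) -> M) -> M) :=
  forall x, mspts X x -> forall a b, lt a (f x) -> lt (f x) b ->
    exists e, pos e /\ forall y, mspts X y -> lt (msdist X x y) e ->
      lt a (f y) /\ lt (f y) b.

Record defMetricGroup := DefMetricGroup {
  gspace :> defMetricSpace;
  gmul : ('I_(msdim gspace) -> M) -> ('I_(msdim gspace) -> M) -> ('I_(msdim gspace) -> M);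
  ginv : ('I_(msdim gspace) -> M) -> ('I_(msdim gspace) -> M);
  gone : 'I_(msdim gspace) -> M;
  gmul_def : def_map (fun w : 'I_(msdim gspace + msdim gspace) -> M =>
                        mspts gspace (tfst w) /\ mspts gspace (tsnd w))
                     (fun w => gmul (tfst w) (tsnd w));
  ginv_def : def_map (mspts gspace) ginv;
  gone_in : mspts gspace gone;
  gmul_in : forall g h, mspts gspace g -> mspts gspace h -> mspts gspace (gmul g h);
  ginv_in : forall g, mspts gspace g -> mspts gspace (ginv g);
  gmulA : forall g h k, mspts gspace g -> mspts gspace h -> mspts gspace k ->
      gmul g (gmul h k) = gmul (gmul g h) k;
  gmul1g : forall g, mspts gspace g -> gmul gone g = g;
  gmulg1 : forall g, mspts gspace g -> gmul g gone = g;
  gmulVg : forall g, mspts gspace g -> gmul (ginv g) g = gone;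
  gmulgV : forall g, mspts gspace g -> gmul g (ginv g) = gone;
  gmul_cont : forall g h, mspts gspace g -> mspts gspace h ->
      forall e, pos e -> exists d, pos d /\
        forall g' h', mspts gspace g' -> mspts gspace h' ->
          lt (msdist gspace g g') d -> lt (msdist gspace h h') d ->
          lt (msdist gspace (gmul g h) (gmul g' h')) e;
  ginv_cont : forall g, mspts gspace g ->
      forall e, pos e -> exists d, pos d /\
        forall g', mspts gspace g' -> lt (msdist gspace g g') d ->
          lt (msdist gspace (ginv g) (ginv g')) e
}.

Arguments gspace : clear implicits.
Arguments gmul : clear implicits.
Arguments ginv : clear implicits.
Arguments gone : clear implicits.

(* A definable family is given by a
   definable parameter set T in M^k and a definable C in M^(k+dim); its
   members are the fibers C_t = {g | (t,g) in C}, t in T. *)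
Definition def_compact (X : defMetricSpace) : Prop :=
  forall (k : nat) (T : ('I_k -> M) -> Prop)
         (C : ('I_(k + msdim X) -> M) -> Prop),
    defn T -> defn C ->
    (exists t, T t) ->
    (forall t, T t -> closed_in (X:=X) (fun g => C (tcat t g))) ->
    (forall t, T t -> exists g, C (tcat t g)) ->
    (forall s t, T s -> T t -> exists u, T u /\
        forall g, C (tcat u g) -> C (tcat s g) /\ C (tcat t g)) ->
    exists g, forall t, T t -> C (tcat t g).

Record defAction (G : defMetricGroup) (X : defMetricSpace) := DefAction {
  act :> ('I_(msdim G) -> M) -> ('I_(msdim X) -> M) -> ('I_(msdim X) -> M);
  act_def : def_map (fun w : 'I_(msdim G + msdim X) -> M =>
                       mspts G (tfst w) /\ mspts X (tsnd w))
                    (fun w => act (tfst w) (tsnd w));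
  act_in : forall g x, mspts G g -> mspts X x -> mspts X (act g x);
  act1 : forall x, mspts X x -> act (gone G) x = x;
  actM : forall g h x, mspts G g -> mspts G h -> mspts X x ->
      act g (act h x) = act (gmul G g h) x;
  act_cont : forall g x, mspts G g -> mspts X x ->
      forall e, pos e -> exists d, pos d /\
        forall g' x', mspts G g' -> mspts X x' ->
          lt (msdist G g g') d -> lt (msdist X x x') d ->
          lt (msdist X (act g x) (act g' x')) e
}.

Definition invariant_set (G : defMetricGroup) (X : defMetricSpace)
    (a : defAction G X) (A : ('I_(msdim X) -> M) -> Prop) :=
  forall g x, mspts G g -> mspts X x -> (A (a g x) <-> A x).

Definition invariant_fun (G : defMetricGroup) (X : defMetricSpace)
    (a : defAction G X) (f : ('I_(msdim X) -> M) -> M) :=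
  forall g x, mspts G g -> mspts X x -> f (a g x) = f x.

End Definable.

Arguments msdim {R} _.
Arguments mspts {R} _ _.
Arguments msdist {R} _ _ _.
Arguments gspace {R} _.
Arguments gmul {R} _ _ _.
Arguments ginv {R} _ _.
Arguments gone {R} _ _.

From mathcomp Require Import all_boot zify.
From Stdlib Require Import FunctionalExtensionality PropExtensionality Classical ClassicalEpsilon.

(* Take f x = inf { dist (g x, a) | g in G, a in A }, the distance from the
   orbit G x to A (any positive constant if A is empty).  It is G-invariant
   because G (h x) = G x, and definable because infima of definable sets exist
   by definable completeness; moreover f x < t iff dist (g x, A) < t for some g.
   If f x = 0, the sets { g | dist (g x, A) < t }, t > 0, form a definable
   filtered family, so by definable compactness some g0 is adherent to all of
   them; continuity of the action and closedness of A give g0 x in A, hence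
   x in A.  Upper semicontinuity of f follows from continuity of the action at
   a single (g, x); lower semicontinuity is the same compactness argument
   applied to points y near x. *)

Set Implicit Arguments.
Unset Strict Implicit.
Unset Printing Implicit Defensive.

Section OrderedGroup.
Context {R : dclomStructure}.
Local Notation M := (carrier R).
Local Notation "x + y" := (add x y).
Implicit Types a b c d x y z : M.

Lemma lt_asym x y : lt x y -> ~ lt y x.
Proof. by move=> Hxy Hyx; apply: (lt_irr (lt_trans Hxy Hyx)). Qed.

Lemma lt_le_trans x y z : lt x y -> ~ lt z y -> lt x z.
Proof. by move=> Hxy Hyz; case: (lt_total y z) => [|[<-|]] // /(lt_trans Hxy). Qed.

Lemma le_lt_trans x y z : ~ lt y x -> lt y z -> lt x z.
Proof. by move=> Hxy Hyz; case: (lt_total x y) => [/lt_trans|[->|]] //; apply. Qed.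

Lemma le_anti x y : ~ lt x y -> ~ lt y x -> x = y.
Proof. by case: (lt_total x y) => [|[|]]. Qed.

Lemma lt_add a b c d : lt a b -> lt c d -> lt (a + c) (b + d).
Proof. by move=> Hab Hcd; apply: lt_trans (lt_addr c Hab) (lt_addl b Hcd). Qed.

Lemma lt_le_add a b c d : lt a b -> ~ lt d c -> lt (a + c) (b + d).
Proof.
move=> Hab Hdc; case: (lt_total c d) => [|[<-|]] //; [exact: lt_add | exact: lt_addr].
Qed.

Lemma lt_sub_pos a b : lt a b -> pos (b + neg a) /\ (b + neg a) + a = b.
Proof.
move=> Hab; split; last by rewrite -addA addNr addr0.
by have := lt_addr (neg a) Hab; rewrite addrN.
Qed.

Definition is_inf (Y : M -> Prop) r :=
  (forall s, Y s -> ~ lt s r) /\ (forall b, (forall s, Y s -> ~ lt s b) -> ~ lt r b).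

Lemma is_inf_lt (Y : M -> Prop) r b : is_inf Y r -> lt r b -> exists s, Y s /\ lt s b.
Proof.
move=> [_ Hglb] Hrb; apply: NNPP => Hno; apply: (Hglb b _ Hrb) => s Hs Hsb.
by apply: Hno; exists s.
Qed.

Lemma pos_exists : exists c, pos c.
Proof. by have [_ [c [_ Hc]]] := lt_noendpoints (zero R); exists c. Qed.

Lemma pos_split c : pos c -> exists a b, pos a /\ pos b /\ a + b = c.
Proof.
move=> Hc; have [a [Ha Hac]] := lt_dense Hc.
by have [Hb Hab] := lt_sub_pos Hac; exists (c + neg a), a.
Qed.

Lemma pos_min a b : pos a -> pos b -> exists c, pos c /\ ~ lt a c /\ ~ lt b c.
Proof.
move=> Ha Hb; case: (lt_total a b) => [Hab|[<-|Hba]].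
- by exists a; split; [|split; [apply: lt_irr | apply: lt_asym]].
- by exists a; split; [|split; apply: lt_irr].
- by exists b; split; [|split; [apply: lt_asym | apply: lt_irr]].
Qed.

End OrderedGroup.

Section MetricSpace.
Context {R : dclomStructure} (Y : defMetricSpace R).
Local Notation M := (carrier R).
Local Notation pts := (mspts Y).
Local Notation d := (msdist Y).
Local Notation point := ('I_(msdim Y) -> M).

Lemma msdistxx y : pts y -> d y y = zero R.
Proof. by move=> Hy; apply/(msdist_eq0 Hy Hy). Qed.

Lemma msdist_lt_tri x y z e1 e2 : pts x -> pts y -> pts z ->
  lt (d x y) e1 -> lt (d y z) e2 -> lt (d x z) (add e1 e2).
Proof. by move=> Hx Hy Hz H1 H2; apply: le_lt_trans (msdist_tri Hx Hy Hz) (lt_add H1 H2). Qed.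

Lemma msdist_lt_le_tri x y z e1 e2 : pts x -> pts y -> pts z ->
  lt (d x y) e1 -> ~ lt e2 (d y z) -> lt (d x z) (add e1 e2).
Proof. by move=> Hx Hy Hz H1 H2; apply: le_lt_trans (msdist_tri Hx Hy Hz) (lt_le_add H1 H2). Qed.

Definition closure (P : point -> Prop) (y : point) :=
  pts y /\ forall e, pos e -> exists y', pts y' /\ lt (d y y') e /\ P y'.

Lemma subset_closure (P : point -> Prop) y : pts y -> P y -> closure P y.
Proof. by move=> Hy HP; split=> // e He; exists y; rewrite msdistxx. Qed.

Lemma closureS (P Q : point -> Prop) y :
  (forall y', P y' -> Q y') -> closure P y -> closure Q y.
Proof.
move=> HPQ [Hy Hcl]; split=> // e He.
by have [y' [Hy' [Hyy' /HPQ HQ]]] := Hcl e He; exists y'.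
Qed.

Lemma closure_closed P : closed_in (closure P).
Proof.
split=> [y [] //|y Hy Hny].
have [e [He Hfar]] : exists e, pos e /\ forall y', pts y' -> lt (d y y') e -> ~ P y'.
  apply: NNPP => Hnear; apply: Hny; split=> // e He; apply: NNPP => Hno; apply: Hnear.
  by exists e; split=> // y' Hy' Hyy' HP; apply: Hno; exists y'.
have [e1 [e2 [He1 [He2 Hsum]]]] := pos_split He; subst e.
exists e1; split=> // z Hz Hyz [_ Hcl].
have [y' [Hy' [Hzy' HP]]] := Hcl _ He2.
exact: (Hfar y' Hy' (msdist_lt_tri Hy Hz Hy' Hyz Hzy') HP).
Qed.

End MetricSpace.

Arguments closure {R} Y P y.

Section Environments.
Context {R : dclomStructure}.
Local Notation M := (carrier R).
Local Notation env := (nat -> M).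

Lemma defn_ext n (P Q : ('I_n -> M) -> Prop) :
  defn P -> (forall x, P x <-> Q x) -> defn Q.
Proof.
move=> HP HPQ; suff -> : Q = P by [].
by apply: functional_extensionality => x; apply: propositional_extensionality; split; apply HPQ.
Qed.

Lemma defn_cast m m' (Q : ('I_m -> M) -> Prop) (Em : m = m') :
  defn Q -> defn (fun x : 'I_m' -> M => Q (fun i => x (cast_ord Em i))).
Proof.
case: m' / Em => HQ; apply: (defn_ext HQ) => x.
by have -> : (fun i => x (cast_ord erefl i)) = x by apply: functional_extensionality => i; rewrite cast_ord_id.
Qed.

Definition env_of n (x : 'I_n -> M) : env :=
  fun j => if insub j is Some i then x i else zero R.

Lemma env_of_lt n (x : 'I_n -> M) j (Hj : j < n) : env_of x j = x (Ordinal Hj).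
Proof. by rewrite /env_of insubT /=; congr x; apply: val_inj. Qed.

Lemma env_of_val n (x : 'I_n -> M) (i : 'I_n) : env_of x i = x i.
Proof. by rewrite (env_of_lt x (ltn_ord i)); congr x; apply: val_inj. Qed.

(* A first-order condition on the variables e 0, e 1, ... of an environment
   e : nat -> M; edefn n P says that P reads only e 0, ..., e (n-1) and
   cuts out a definable subset of M^n. *)
Definition edefn n (P : env -> Prop) :=
  (forall e e', (forall j, j < n -> e j = e' j) -> P e -> P e') /\
  defn (fun x : 'I_n -> M => P (env_of x)).

Lemma edefn_ext n (P Q : env -> Prop) :
  edefn n P -> (forall e, P e <-> Q e) -> edefn n Q.
Proof.
move=> HP HPQ; suff -> : Q = P by [].
by apply: functional_extensionality => e; apply: propositional_extensionality; split; apply HPQ.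
Qed.

Lemma edefn_local n P e e' :
  edefn n P -> (forall j, j < n -> e j = e' j) -> P e <-> P e'.
Proof. by move=> [HP _] E; split; apply: HP => // j Hj; rewrite E. Qed.

Lemma edefn_shift n P : edefn n P -> edefn n.+1 (fun e => P (fun j => e j.+1)).
Proof.
move=> [Hloc HP]; split=> [e e' E|]; first by apply: Hloc => j Hj; apply: E.
apply: (defn_ext (defn_cast (add1n n) (defn_prodl HP))) => x.
apply: (edefn_local (conj Hloc HP)) => j Hj.
by rewrite (env_of_lt _ Hj) (env_of_lt _ (Hj : j.+1 < n.+1)) /tsnd; congr x; apply: val_inj.
Qed.

Lemma edefn_shiftn k n P : edefn n P -> edefn (k + n) (fun e => P (fun j => e (k + j))).
Proof.
move=> HP; elim: k => [|k IH] //=.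
by rewrite addSn; apply: (edefn_ext (edefn_shift IH)).
Qed.

Lemma edefn_True n : edefn n (fun _ => True).
Proof. by split=> //; apply: defn_full. Qed.

Lemma edefn_not n P : edefn n P -> edefn n (fun e => ~ P e).
Proof.
move=> [Hloc HP]; split; last exact: defn_compl.
by move=> e e' E HnP HP'; apply: HnP; apply: Hloc HP' => j Hj; rewrite E.
Qed.

Lemma edefn_and n P Q : edefn n P -> edefn n Q -> edefn n (fun e => P e /\ Q e).
Proof.
move=> [Hloc1 HP] [Hloc2 HQ]; split.
  by move=> e e' E [? ?]; split; [apply: Hloc1 E _ | apply: Hloc2 E _].
apply: (defn_ext (defn_compl (defn_union (defn_compl HP) (defn_compl HQ)))) => x; tauto.
Qed.

Lemma edefn_iff n P Q : edefn n P -> edefn n Q -> edefn n (fun e => P e <-> Q e).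
Proof.
move=> HP HQ; have := edefn_and (edefn_not (edefn_and HP (edefn_not HQ)))
                                (edefn_not (edefn_and HQ (edefn_not HP))).
by move/edefn_ext; apply=> e; tauto.
Qed.

Lemma edefn_all n k (P : nat -> env -> Prop) :
  (forall i, i < k -> edefn n (P i)) -> edefn n (fun e => forall i, i < k -> P i e).
Proof.
elim: k => [|k IH] HP; first by apply: (edefn_ext (edefn_True n)).
apply: (edefn_ext (edefn_and (IH (fun i Hi => HP i (ltnW Hi))) (HP k (ltnSn k)))) => e.
split=> [[Hlt Hk] i Hi|H]; last by split=> [i Hi|]; apply: H; lia.
by case: (ltngtP i k) => [/Hlt|Hki|->] //; lia.
Qed.

Lemma edefn_eq n i j : i < n -> j < n -> edefn n (fun e => e i = e j).
Proof.
move=> Hi Hj; split=> [e e' E|]; first by rewrite !E.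
apply: (defn_ext (defn_diag R (Ordinal Hi) (Ordinal Hj))) => x.
by rewrite (env_of_lt _ Hi) (env_of_lt _ Hj).
Qed.

Definition upd (e : env) n a : env := fun j => if j == n then a else e j.

Lemma edefn_proj n P : edefn n.+1 P -> edefn n (fun e => exists a, P (upd e n a)).
Proof.
move=> [Hloc HP]; split.
  move=> e e' E [a Ha]; exists a; apply: Hloc Ha => j Hj; rewrite /upd.
  by case: eqP => // /eqP ?; apply: E; lia.
apply: (defn_ext (defn_proj (defn_cast (esym (addn1 n)) HP))) => x.
have Ex : forall a j, j < n.+1 ->
    env_of (fun i => tcat x (tconst1 a) (cast_ord (esym (addn1 n)) i)) j = upd (env_of x) n a j.
  move=> a j Hj; rewrite (env_of_lt _ Hj) /tcat /upd.
  case: splitP => k /= Hk; last by rewrite ifT //; move: (ltn_ord k); lia.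
  by rewrite ifF ?Hk ?env_of_val //; move: (ltn_ord k); lia.
by split=> -[a Ha]; exists a; move: Ha; apply: Hloc => j Hj; rewrite Ex.
Qed.

Lemma edefn_tuple0 m (B : ('I_m -> M) -> Prop) :
  defn B -> edefn m (fun e => B (fun i : 'I_m => e i)).
Proof.
move=> HB; split.
  by move=> e e' E; have -> : (fun i : 'I_m => e' i) = (fun i : 'I_m => e i)
    by apply: functional_extensionality => i; rewrite E.
apply: (defn_ext HB) => x.
by have -> : (fun i : 'I_m => env_of x i) = x by apply: functional_extensionality => i; rewrite env_of_val.
Qed.

Definition envcat k (u v : env) : env := fun j => if j < k then u j else v (j - k).

Definition blk o m (e : env) : 'I_m -> M := fun i => e (o + i).
Arguments blk o m e : clear implicits.

Lemma envcat_lo k u v j : j < k -> envcat k u v j = u j.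
Proof. by rewrite /envcat => ->. Qed.

Lemma envcat_hi k u v j : envcat k u v (k + j) = v j.
Proof. by rewrite /envcat ifF ?addKn //; lia. Qed.

Lemma envcat_hi0 k u v : envcat k u v k = v 0.
Proof. by have := @envcat_hi k u v 0; rewrite addn0. Qed.

Lemma blk_envcat_lo o m k u v : o + m <= k -> blk o m (envcat k u v) = blk o m u.
Proof.
move=> Hk; apply: functional_extensionality => i.
by rewrite /blk envcat_lo //; move: (ltn_ord i); lia.
Qed.

Lemma blk_envcat_hi o m k u v : blk (k + o) m (envcat k u v) = blk o m v.
Proof. by apply: functional_extensionality => i; rewrite /blk -addnA envcat_hi. Qed.

Lemma blk_envcat_hi0 m k u v : blk k m (envcat k u v) = blk 0 m v.
Proof. by have := @blk_envcat_hi 0 m k u v; rewrite addn0. Qed.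

Lemma blk0_env_of k (x : 'I_k -> M) : blk 0 k (env_of x) = x.
Proof. by apply: functional_extensionality => i; rewrite /blk env_of_val. Qed.

Lemma env_of_blk0 k (y : env) j : j < k -> env_of (blk 0 k y) j = y j.
Proof. by move=> Hj; rewrite (env_of_lt _ Hj). Qed.

Lemma edefn_ex n k P : edefn (n + k) P -> edefn n (fun e => exists y, P (envcat n e y)).
Proof.
elim: k P => [|k IH] P.
  rewrite addn0 => HP; apply: (edefn_ext HP) => e; split=> [|[y]].
    by move=> He; exists e; move: He; apply: (proj1 HP) => j Hj; rewrite envcat_lo.
  by apply: (proj1 HP) => j Hj; rewrite envcat_lo.
rewrite addnS => HP; apply: (edefn_ext (IH _ (edefn_proj HP))) => e; split.
  move=> [y [a Ha]]; exists (upd y k a); move: Ha.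
  suff -> : upd (envcat n e y) (n + k) a = envcat n e (upd y k a) by [].
  apply: functional_extensionality => j; rewrite /upd /envcat.
  by case: (ltnP j n) => Hj; [rewrite ifF //; lia | congr (if _ then _ else _); apply/eqP/eqP; lia].
move=> [y Hy]; exists y, (y k).
suff -> : upd (envcat n e y) (n + k) (y k) = envcat n e y by [].
apply: functional_extensionality => j; rewrite /upd /envcat.
by case: eqP => [->|//]; rewrite ifF ?addKn //; lia.
Qed.

Lemma edefn_pull k n P (s : nat -> nat) :
  edefn k P -> (forall i, i < k -> s i < n) -> edefn n (fun e => P (fun i => e (s i))).
Proof.
move=> HP Hs.
have Hcopy : edefn (n + k) (fun e => forall i, i < k -> e (n + i) = e (s i)).
  by apply: edefn_all => i Hi; apply: edefn_eq; [lia | have := Hs i Hi; lia].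
apply: (edefn_ext (edefn_ex (edefn_and Hcopy (edefn_shiftn n HP)))) => e; split.
  move=> [y [Hy]]; apply: (proj1 HP) => j Hj.
  by rewrite Hy // envcat_lo ?Hs.
move=> He; exists (fun i => e (s i)); split.
  by move=> i Hi; rewrite envcat_hi envcat_lo ?Hs.
by move: He; apply: (proj1 HP) => j Hj; rewrite envcat_hi.
Qed.

Lemma edefn_tuple m n (B : ('I_m -> M) -> Prop) (s : nat -> nat) :
  defn B -> (forall i, i < m -> s i < n) -> edefn n (fun e => B (fun i : 'I_m => e (s i))).
Proof. by move=> HB; apply: (edefn_pull (edefn_tuple0 HB)). Qed.

Lemma edefn_blk m (B : ('I_m -> M) -> Prop) n o :
  defn B -> o + m <= n -> edefn n (fun e => B (blk o m e)).
Proof. by move=> HB Hn; apply: (edefn_tuple (s := addn o) HB) => i Hi; lia. Qed.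

Lemma edefn_eq_cst n j c : j < n -> edefn n (fun e => e j = c).
Proof.
by move=> Hj; apply: (edefn_tuple (s := fun _ => j) (defn_const c)).
Qed.

Lemma edefn_lt n i j : i < n -> j < n -> edefn n (fun e => lt (e i) (e j)).
Proof.
move=> Hi Hj; pose s k := if k == 0 then i else j.
have Hs k : k < 2 -> s k < n by rewrite /s; case: eqP.
have := edefn_tuple (defn_lt R) Hs.
by move/edefn_ext; apply=> e; rewrite /s /= !inordK.
Qed.

Lemma edefn_eq_blk n o k (c : 'I_k -> M) : o + k <= n -> edefn n (fun e => blk o k e = c).
Proof.
move=> Hn; have Hc : edefn n (fun e => forall i, i < k -> e (o + i) = env_of c i).
  by apply: edefn_all => i Hi; apply: edefn_eq_cst; lia.
apply: (edefn_ext Hc) => e; split=> [He|<- i Hi].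
  by apply: functional_extensionality => i; rewrite /blk He // env_of_val.
by rewrite (env_of_lt _ Hi).
Qed.

(* Here and below, hypotheses of the form P (envcat N e _) _ <-> P e _ say that
   P does not read the variables e N, e (N+1), ... *)
Lemma edefn_exists N k (P : env -> ('I_k -> M) -> Prop) :
  (forall e x, P (envcat N e (env_of x)) x <-> P e x) ->
  edefn (N + k) (fun e => P e (blk N k e)) -> edefn N (fun e => exists x, P e x).
Proof.
move=> Hloc HP; apply: (edefn_ext (edefn_ex HP)) => e; split=> -[y].
  rewrite blk_envcat_hi0 => Hy; exists (blk 0 k y); apply/Hloc.
  have := edefn_local (e := envcat N e y) (e' := envcat N e (env_of (blk 0 k y))) HP.
  rewrite !blk_envcat_hi0 blk0_env_of => <- // j Hj.
  by rewrite /envcat; case: ifP => // Hjn; rewrite env_of_blk0 //; lia.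
by move=> /Hloc Hy; exists (env_of y); rewrite blk_envcat_hi0 blk0_env_of.
Qed.

Lemma edefn_exists1 N (P : env -> M -> Prop) :
  (forall e r, P (envcat N e (fun _ => r)) r <-> P e r) ->
  edefn (N + 1) (fun e => P e (e N)) -> edefn N (fun e => exists r, P e r).
Proof.
move=> Hloc HP; apply: (edefn_ext (edefn_ex HP)) => e; split=> -[y].
  rewrite envcat_hi0 => Hy; exists (y 0); apply/Hloc.
  have := edefn_local (e := envcat N e y) (e' := envcat N e (fun _ => y 0)) HP.
  rewrite !envcat_hi0 => <- // j Hj.
  by rewrite /envcat; case: ifP => // Hjn; congr y; lia.
by move=> /Hloc Hy; exists (fun _ => y); rewrite envcat_hi0.
Qed.

Lemma edefn_forall1 N (P : env -> M -> Prop) :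
  (forall e r, P (envcat N e (fun _ => r)) r <-> P e r) ->
  edefn (N + 1) (fun e => P e (e N)) -> edefn N (fun e => forall r, P e r).
Proof.
move=> Hloc HP; have Hloc' e r : ~ P (envcat N e (fun _ => r)) r <-> ~ P e r by rewrite Hloc.
apply: (edefn_ext (edefn_not (edefn_exists1 Hloc' (edefn_not HP)))) => e.
by split=> [H r|H [r]]; [apply: NNPP => Hr; apply: H; exists r | apply].
Qed.

Lemma edefn_fix N k (P : env -> ('I_k -> M) -> Prop) (c : 'I_k -> M) :
  (forall e, P (envcat N e (env_of c)) c <-> P e c) ->
  edefn (N + k) (fun e => P e (blk N k e)) -> edefn N (fun e => P e c).
Proof.
move=> Hloc HP.
have Hloc' e x : (x = c /\ P (envcat N e (env_of x)) x) <-> (x = c /\ P e x).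
  by split=> -[Ex]; rewrite Ex Hloc.
have := edefn_exists Hloc' (edefn_and (edefn_eq_blk c (leqnn (N + k))) HP).
by move/edefn_ext; apply=> e; split=> [[x [-> //]]|Hc]; exists c.
Qed.

Lemma edefn_fix1 N (P : env -> M -> Prop) c :
  (forall e, P (envcat N e (fun _ => c)) c <-> P e c) ->
  edefn (N + 1) (fun e => P e (e N)) -> edefn N (fun e => P e c).
Proof.
move=> Hloc HP.
have Hloc' e r : (r = c /\ P (envcat N e (fun _ => r)) r) <-> (r = c /\ P e r).
  by split=> -[Er]; rewrite Er Hloc.
have HN : N < N + 1 by rewrite addn1.
have := edefn_exists1 Hloc' (edefn_and (edefn_eq_cst c HN) HP).
by move/edefn_ext; apply=> e; split=> [[r [-> //]]|Hc]; exists c.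
Qed.

End Environments.

Arguments blk {R} o m e.

Ltac simpl_env := repeat first
  [ rewrite blk_envcat_hi0 | rewrite blk_envcat_hi | rewrite envcat_hi0 | rewrite envcat_hi
  | (rewrite blk_envcat_lo; [|lia]) | (rewrite envcat_lo; [|lia]) | rewrite blk0_env_of ].

Section DefinableRelations.
Context {R : dclomStructure}.
Local Notation M := (carrier R).
Local Notation env := (nat -> M).

Lemma tfst_tcat n m (x : 'I_n -> M) (y : 'I_m -> M) : tfst (tcat x y) = x.
Proof.
apply: functional_extensionality => i; rewrite /tfst /tcat.
by case: splitP => j /= Hj; [congr x; apply: val_inj | move: (ltn_ord i); lia].
Qed.

Lemma tsnd_tcat n m (x : 'I_n -> M) (y : 'I_m -> M) : tsnd (tcat x y) = y.
Proof.
apply: functional_extensionality => i; rewrite /tsnd /tcat.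
by case: splitP => j /= Hj; [move: (ltn_ord j); lia | congr y; apply: val_inj => /=; lia].
Qed.

Lemma blk1_eq_tconst1 o (e : env) r : blk o 1 e = tconst1 r <-> e o = r.
Proof.
split=> [/(f_equal (fun x => x ord0))|Er]; first by rewrite /blk /= addn0.
by apply: functional_extensionality => i; rewrite /blk /tconst1 (ord1 i) addn0.
Qed.

Lemma edefn_blocks3 a b c (B : ('I_(a + b + c) -> M) -> Prop) N o1 o2 o3 :
  defn B -> o1 + a <= N -> o2 + b <= N -> o3 + c <= N ->
  edefn N (fun e => B (tcat (tcat (blk o1 a e) (blk o2 b e)) (blk o3 c e))).
Proof.
move=> HB H1 H2 H3.
pose s i := if i < a then o1 + i else if i < a + b then o2 + (i - a) else o3 + (i - (a + b)).
have Hs i : i < a + b + c -> s i < N by rewrite /s; repeat case: ifP => ?; lia.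
move/edefn_ext: (edefn_tuple HB Hs); apply=> e.
suff -> : (fun i : 'I_(a + b + c) => e (s i)) = tcat (tcat (blk o1 a e) (blk o2 b e)) (blk o3 c e).
  by [].
apply: functional_extensionality => i; rewrite /tcat /blk /s.
case: splitP => [j|k] ->; last by rewrite ifF; [congr e; lia | lia].
by case: splitP => [j'|k'] -> //; congr e; lia.
Qed.

Lemma edefn_cst_lt n j (c : M) : j < n -> edefn n (fun e => lt c (e j)).
Proof.
move=> Hj; pose P (e : env) r := r = c /\ lt r (e j).
have Hloc e r : P (envcat n e (fun _ => r)) r <-> P e r by rewrite /P envcat_lo.
have Hn : n < n + 1 by rewrite addn1.
have := edefn_exists1 Hloc (edefn_and (edefn_eq_cst c Hn) (edefn_lt Hn (ltn_addr 1 Hj))).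
by move/edefn_ext; apply=> e; split=> [[r [-> //]]|]; exists c.
Qed.

Lemma defn_of_edefn1 (P : M -> Prop) :
  edefn 1 (fun e => P (e 0)) -> defn (fun z : 'I_1 -> M => P (z ord0)).
Proof. by move=> [_ HP]; apply: (defn_ext HP) => z; rewrite (env_of_val z ord0). Qed.

Lemma defn_of_edefn_pair m (Q : M -> ('I_m -> M) -> Prop) :
  edefn (1 + m) (fun e => Q (e 0) (blk 1 m e)) ->
  defn (fun z : 'I_(1 + m) -> M => Q (z (lshift m ord0)) (tsnd z)).
Proof.
move=> [_ HQ]; apply: (defn_ext HQ) => z.
have -> : blk 1 m (env_of z) = tsnd z.
  by apply: functional_extensionality => i; rewrite /blk (env_of_val z (rshift 1 i)).
by rewrite (env_of_val z (lshift m ord0)).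
Qed.

Lemma def_fun_of_edefn n (D : ('I_n -> M) -> Prop) (F : ('I_n -> M) -> M) :
  edefn (n + 1) (fun e => D (blk 0 n e) /\ e n = F (blk 0 n e)) -> def_fun D F.
Proof.
move=> [_ H]; apply: (defn_ext H) => z.
have -> : blk 0 n (env_of z) = tfst z.
  by apply: functional_extensionality => i; rewrite /blk (env_of_val z (lshift 1 i)).
have -> : tsnd z = blk n 1 (env_of z).
  by apply: functional_extensionality => i; rewrite /blk (env_of_val z (rshift n i)).
by rewrite blk1_eq_tconst1.
Qed.

Section Metric.
Context (Y : defMetricSpace R).
Local Notation m := (msdim Y).
Local Notation pts := (mspts Y).
Local Notation d := (msdist Y).

Lemma edefn_msdist_lt N ox oy ot : ox + m <= N -> oy + m <= N -> ot < N ->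
  edefn N (fun e => pts (blk ox m e) /\ pts (blk oy m e) /\
                    lt (d (blk ox m e) (blk oy m e)) (e ot)).
Proof.
move=> Hx Hy Ht.
have HN1 := leq_addr 1 N.
have Hgraph : edefn (N + 1) (fun e =>
    pts (blk ox m e) /\ pts (blk oy m e) /\ e N = d (blk ox m e) (blk oy m e)).
  move/edefn_ext: (edefn_blocks3 (msdist_def Y) (leq_trans Hx HN1) (leq_trans Hy HN1) (leqnn (N + 1))).
  by apply=> e; rewrite !tfst_tcat !tsnd_tcat blk1_eq_tconst1; tauto.
pose P e r := (pts (blk ox m e) /\ pts (blk oy m e) /\ r = d (blk ox m e) (blk oy m e)) /\
              lt r (e ot).
have Hloc e r : P (envcat N e (fun _ => r)) r <-> P e r by rewrite /P; simpl_env.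
have HN : N < N + 1 by rewrite addn1.
have := edefn_exists1 Hloc (edefn_and Hgraph (edefn_lt HN (ltn_addr 1 Ht))).
move/edefn_ext; apply=> e.
by split=> [[r [[Hx' [Hy' ->]] Hr]] | [Hx' [Hy' Hlt]]]; last exists (d (blk ox m e) (blk oy m e)).
Qed.

End Metric.
End DefinableRelations.

Section DefinableCompactness.
Context {R : dclomStructure} (Y : defMetricSpace R).
Local Notation M := (carrier R).
Local Notation m := (msdim Y).
Local Notation pts := (mspts Y).
Local Notation d := (msdist Y).

Lemma edefn_closure (Phi : M -> ('I_m -> M) -> Prop) :
  edefn (1 + m) (fun e => Phi (e 0) (blk 1 m e)) ->
  edefn (1 + m) (fun e => closure Y (Phi (e 0)) (blk 1 m e)).
Proof.
move=> HPhi; set N := 1 + m.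
have HPhi' : edefn (N + 1 + m) (fun e => Phi (e 0) (blk (N + 1) m e)).
  have Hs i : i < 1 + m -> (if i == 0 then 0 else N + i) < N + 1 + m by case: i => /=; lia.
  move/edefn_ext: (edefn_pull HPhi Hs); apply=> e /=.
  suff -> : blk 1 m (fun i => e (if i == 0 then 0 else N + i)) = blk (N + 1) m e by [].
  by apply: functional_extensionality => i; rewrite /blk /= addnA.
pose Q e y' := (pts (blk 1 m e) /\ pts y' /\ lt (d (blk 1 m e) y') (e N)) /\ Phi (e 0) y'.
have HQ : edefn (N + 1) (fun e => exists y', Q e y').
  apply: edefn_exists => [e y'|]; first by rewrite /Q; simpl_env.
  by apply: edefn_and HPhi'; apply: edefn_msdist_lt; lia.
pose P e r := pos r -> exists y', (pts (blk 1 m e) /\ pts y' /\ lt (d (blk 1 m e) y') r) /\ Phi (e 0) y'.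
have HP : edefn N (fun e => forall r, P e r).
  apply: edefn_forall1 => [e r|]; first by rewrite /P; simpl_env.
  have := edefn_not (edefn_and (edefn_cst_lt (zero R) (_ : N < N + 1)) (edefn_not HQ)).
  by move/(_ ltac:(lia))/edefn_ext; apply=> e; rewrite /P /Q /pos; tauto.
move/edefn_ext: (edefn_and (edefn_blk (mspts_def Y) (leqnn N)) HP); apply=> e.
rewrite /closure /P; split=> -[Hy Hcl]; split=> // r /Hcl [y' Hy']; exists y'; tauto.
Qed.

Lemma def_compact_cluster (Phi : M -> ('I_m -> M) -> Prop) :
  def_compact Y -> edefn (1 + m) (fun e => Phi (e 0) (blk 1 m e)) ->
  (forall t, pos t -> exists y, pts y /\ Phi t y) ->
  (forall s t y, ~ lt t s -> Phi s y -> Phi t y) ->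
  exists y0, forall t, pos t -> closure Y (Phi t) y0.
Proof.
move=> Hcomp HPhi Hne Hmono.
pose T (t : 'I_1 -> M) := pos (t ord0).
pose C (z : 'I_(1 + m) -> M) := closure Y (Phi (z (lshift m ord0))) (tsnd z).
have HT : defn T := defn_of_edefn1 (edefn_cst_lt (zero R) (ltnSn 0)).
have HC : defn C := defn_of_edefn_pair (Q := fun t => closure Y (Phi t)) (edefn_closure HPhi).
have CT t y : C (tcat t y) = closure Y (Phi (t ord0)) y.
  by rewrite /C -[tcat t y (lshift m ord0)]/(tfst (tcat t y) ord0) tfst_tcat tsnd_tcat.
have [c Hc] := @pos_exists R.
have [|t _|t /Hne [y [Hy HPhit]]|s t Hs Ht|y0 Hy0] := Hcomp 1 T C HT HC.
- by exists (tconst1 c).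
- by rewrite (functional_extensionality _ _ (CT t)); apply: closure_closed.
- by exists y; rewrite CT; apply: subset_closure.
- have [u [Hu [Hsu Htu]]] := pos_min Hs Ht.
  exists (tconst1 u); split=> // y; rewrite !CT => Hcl.
  by split; apply: closureS Hcl => y'; apply: Hmono.
- by exists y0 => t Ht; have := Hy0 (tconst1 t) Ht; rewrite CT.
Qed.

End DefinableCompactness.

Section OrbitDistance.
Context {R : dclomStructure} (G : defMetricGroup R) (X : defMetricSpace R)
  (ac : defAction G X) (A : ('I_(msdim X) -> carrier R) -> Prop).
Hypotheses (HA : defn A) (HAcl : closed_in A).
Local Notation M := (carrier R).
Local Notation p := (msdim G).
Local Notation n := (msdim X).
Local Notation ptsG := (mspts G).
Local Notation ptsX := (mspts X).
Local Notation dG := (msdist G).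
Local Notation dX := (msdist X).

Let HAX : forall a, A a -> ptsX a := proj1 HAcl.

Definition near_A t y := exists a, A a /\ lt (dX y a) t.

Definition moves_near x t g := ptsG g /\ near_A t (ac g x).

Definition orbit_near x t := exists g, moves_near x t g.

Definition moves_near_ball x b r g := exists y, ptsX y /\ lt (dX x y) r /\ moves_near y b g.

Lemma near_A_mono s t y : ~ lt t s -> near_A s y -> near_A t y.
Proof. by move=> Hst [a [Ha Hs]]; exists a; split=> //; apply: lt_le_trans Hs Hst. Qed.

Lemma near_A_open t y : ptsX y -> near_A t y ->
  exists e, pos e /\ forall y', ptsX y' -> lt (dX y y') e -> near_A t y'.
Proof.
move=> Hy [a [Ha Hya]]; have [He Ht] := lt_sub_pos Hya.
exists (add t (neg (dX y a))); split=> // y' Hy' Hyy'; exists a; split=> //.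
rewrite -Ht; apply: (msdist_lt_le_tri Hy' Hy (HAX Ha)); last exact: lt_irr.
by rewrite msdist_sym.
Qed.

Lemma orbit_near_act g x : ptsG g -> ptsX x -> orbit_near (ac g x) = orbit_near x.
Proof.
move=> Hg Hx; apply: functional_extensionality => t; apply: propositional_extensionality.
have Hgi := ginv_in Hg.
split=> -[h [Hh Hnear]].
  by exists (gmul G h g); split; [apply: gmul_in | rewrite -actM].
exists (gmul G h (ginv G g)); split; first exact: gmul_in.
rewrite actM //; last exact: gmul_in.
by rewrite -gmulA // gmulVg // gmulg1.
Qed.

Lemma edefn_act N og ox oy : og + p <= N -> ox + n <= N -> oy + n <= N ->
  edefn N (fun e => ptsG (blk og p e) /\ ptsX (blk ox n e) /\
                    blk oy n e = ac (blk og p e) (blk ox n e)).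
Proof.
move=> Hg Hx Hy; move/edefn_ext: (edefn_blocks3 (act_def ac) Hg Hx Hy); apply=> e.
by rewrite !tfst_tcat !tsnd_tcat; tauto.
Qed.

Lemma edefn_near_A N oy ot : oy + n <= N -> ot < N ->
  edefn N (fun e => ptsX (blk oy n e) /\ near_A (e ot) (blk oy n e)).
Proof.
move=> Hy Ht.
pose Q e a := A a /\ ptsX (blk oy n e) /\ ptsX a /\ lt (dX (blk oy n e) a) (e ot).
have HQ : edefn N (fun e => exists a, Q e a).
  apply: edefn_exists => [e a|]; first by rewrite /Q; simpl_env.
  by apply: edefn_and; [apply: (edefn_blk HA) | apply: edefn_msdist_lt]; lia.
move/edefn_ext: HQ; apply=> e; rewrite /Q /near_A; split.
  by move=> [a [Ha [Hy' [_ Hlt]]]]; split=> //; exists a.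
by move=> [Hy' [a [Ha Hlt]]]; exists a; do !split=> //; apply: HAX.
Qed.

Lemma edefn_moves_near N ox ot og : ox + n <= N -> ot < N -> og + p <= N ->
  edefn N (fun e => ptsX (blk ox n e) /\ moves_near (blk ox n e) (e ot) (blk og p e)).
Proof.
move=> Hx Ht Hg.
pose Q e y := (ptsG (blk og p e) /\ ptsX (blk ox n e) /\ y = ac (blk og p e) (blk ox n e)) /\
              ptsX y /\ near_A (e ot) y.
have HQ : edefn N (fun e => exists y, Q e y).
  apply: edefn_exists => [e y|]; first by rewrite /Q; simpl_env.
  by apply: edefn_and; [apply: edefn_act | apply: edefn_near_A]; lia.
move/edefn_ext: HQ; apply=> e; rewrite /Q /moves_near; split.
  by move=> [y [[Hg' [Hx' ->]] [_ Hnear]]].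
by move=> [Hx' [Hg' Hnear]]; exists (ac (blk og p e) (blk ox n e)); do !split=> //; apply: act_in.
Qed.

Lemma edefn_orbit_near N ox ot : ox + n <= N -> ot < N ->
  edefn N (fun e => ptsX (blk ox n e) /\ orbit_near (blk ox n e) (e ot)).
Proof.
move=> Hx Ht.
have HQ : edefn N (fun e => exists g, ptsX (blk ox n e) /\ moves_near (blk ox n e) (e ot) g).
  apply: edefn_exists => [e g|]; first by simpl_env.
  by apply: edefn_moves_near; lia.
move/edefn_ext: HQ; apply=> e; rewrite /orbit_near.
by split=> [[g [Hx' Hg]]|[Hx' [g Hg]]]; [split=> //; exists g | exists g].
Qed.

Lemma edefn_moves_near_at x : ptsX x ->
  edefn (1 + p) (fun e => moves_near x (e 0) (blk 1 p e)).
Proof.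
move=> Hx; pose P e y := ptsX y /\ moves_near y (e 0) (blk 1 p e).
have Hloc e : P (envcat (1 + p) e (env_of x)) x <-> P e x by rewrite /P; simpl_env.
have HP : edefn (1 + p + n) (fun e => P e (blk (1 + p) n e)) by apply: edefn_moves_near; lia.
by move/edefn_ext: (edefn_fix Hloc HP); apply=> e; rewrite /P; tauto.
Qed.

Lemma edefn_moves_near_ball N ox ob or og :
  ox + n <= N -> ob < N -> or < N -> og + p <= N ->
  edefn N (fun e => ptsX (blk ox n e) /\
                    moves_near_ball (blk ox n e) (e ob) (e or) (blk og p e)).
Proof.
move=> Hx Hb Hr Hg.
pose Q e y := (ptsX (blk ox n e) /\ ptsX y /\ lt (dX (blk ox n e) y) (e or)) /\
              ptsX y /\ moves_near y (e ob) (blk og p e).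
have HQ : edefn N (fun e => exists y, Q e y).
  apply: edefn_exists => [e y|]; first by rewrite /Q; simpl_env.
  by apply: edefn_and; [apply: edefn_msdist_lt | apply: edefn_moves_near]; lia.
move/edefn_ext: HQ; apply=> e; rewrite /Q /moves_near_ball.
split=> [[y [[Hx' [Hy Hxy]] [_ Hmv]]]|[Hx' [y [Hy [Hxy Hmv]]]]]; first by split=> //; exists y.
by exists y.
Qed.

Lemma edefn_moves_near_ball_at x b : ptsX x ->
  edefn (1 + p) (fun e => moves_near_ball x b (e 0) (blk 1 p e)).
Proof.
move=> Hx; pose P e y := ptsX y /\ moves_near_ball y b (e 0) (blk 1 p e).
have Hloc e : P (envcat (1 + p) e (env_of x)) x <-> P e x by rewrite /P; simpl_env.
suff HP : edefn (1 + p + n) (fun e => P e (blk (1 + p) n e)).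
  by move/edefn_ext: (edefn_fix Hloc HP); apply=> e; rewrite /P; tauto.
pose P' e c := ptsX (blk (1 + p) n e) /\ moves_near_ball (blk (1 + p) n e) c (e 0) (blk 1 p e).
have Hloc' e : P' (envcat (1 + p + n) e (fun _ => b)) b <-> P' e b by rewrite /P'; simpl_env.
have HP' : edefn (1 + p + n + 1) (fun e => P' e (e (1 + p + n))).
  by apply: edefn_moves_near_ball; lia.
exact: edefn_fix1 Hloc' HP'.
Qed.

Lemma defn_orbit_near_at x : ptsX x -> defn (fun z : 'I_1 -> M => orbit_near x (z ord0)).
Proof.
move=> Hx; apply: defn_of_edefn1; pose P e y := ptsX y /\ orbit_near y (e 0).
have Hloc e : P (envcat 1 e (env_of x)) x <-> P e x by rewrite /P; simpl_env.
have HP : edefn (1 + n) (fun e => P e (blk 1 n e)) by apply: edefn_orbit_near; lia.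
by move/edefn_ext: (edefn_fix Hloc HP); apply=> e; rewrite /P; tauto.
Qed.

Lemma edefn_orbit_near_graph : edefn (n + 1) (fun e =>
  ptsX (blk 0 n e) /\ forall t, (ptsX (blk 0 n e) /\ orbit_near (blk 0 n e) t) <-> lt (e n) t).
Proof.
apply: edefn_and; first by apply: (edefn_blk (mspts_def X)); lia.
apply: edefn_forall1 => [e t|]; first by simpl_env.
by apply: edefn_iff; [apply: edefn_orbit_near | apply: edefn_lt]; lia.
Qed.

Section Gap.
Hypothesis HAne : exists a, A a.

(* Without HAne, orbit_near x is empty and orbit_gap is an arbitrary value. *)
Definition orbit_gap x := epsilon (inhabits (zero R)) (is_inf (orbit_near x)).

Lemma orbit_gap_is_inf x : ptsX x -> is_inf (orbit_near x) (orbit_gap x).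
Proof.
move=> Hx; apply: epsilon_spec; have [a0 Ha0] := HAne.
have [_ [t [_ Ht]]] := lt_noendpoints (dX x a0).
apply: (def_inf (defn_orbit_near_at Hx)).
  by exists t, (gone G); split; [apply: gone_in | exists a0; rewrite act1].
exists (zero R) => s [g [Hg [a [Ha Hs]]]] Hs0.
exact: msdist_ge0 (act_in ac Hg Hx) (HAX Ha) (lt_trans Hs Hs0).
Qed.

Lemma orbit_gap_lt x t : ptsX x -> lt (orbit_gap x) t <-> orbit_near x t.
Proof.
move=> Hx; have Hinf := orbit_gap_is_inf Hx; split.
  move/(is_inf_lt Hinf) => [s [[g [Hg Hnear]] Hst]].
  by exists g; split=> //; apply: near_A_mono Hnear; apply: lt_asym.
move=> [g [Hg [a [Ha Hlt]]]]; have [c [Hc Hct]] := lt_dense Hlt.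
by apply: le_lt_trans (proj1 Hinf c _) Hct; exists g; split=> //; exists a.
Qed.

Lemma orbit_gap_ge0 x : ptsX x -> ~ lt (orbit_gap x) (zero R).
Proof.
move=> Hx /(orbit_gap_lt _ Hx) [g [Hg [a [Ha Hlt]]]].
exact: msdist_ge0 (act_in ac Hg Hx) (HAX Ha) Hlt.
Qed.

Lemma orbit_gap_act g x : ptsG g -> ptsX x -> orbit_gap (ac g x) = orbit_gap x.
Proof. by move=> Hg Hx; rewrite /orbit_gap orbit_near_act. Qed.

Lemma def_fun_orbit_gap : def_fun ptsX orbit_gap.
Proof.
apply: def_fun_of_edefn; move/edefn_ext: edefn_orbit_near_graph; apply=> e.
split=> [[Hx Hiff]|[Hx ->]]; split=> //.
  apply: le_anti => [/Hiff [_ /(orbit_gap_lt _ Hx)]|/(orbit_gap_lt _ Hx) Hnear]; first exact: lt_irr.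
  by apply: (@lt_irr _ (e n)); apply/Hiff.
by move=> t; rewrite orbit_gap_lt //; tauto.
Qed.

Lemma orbit_gap_usc x b : ptsX x -> lt (orbit_gap x) b ->
  exists e, pos e /\ forall y, ptsX y -> lt (dX x y) e -> lt (orbit_gap y) b.
Proof.
move=> Hx /(orbit_gap_lt _ Hx) [g [Hg Hnear]].
have [e [He Hopen]] := near_A_open (act_in ac Hg Hx) Hnear.
have [d [Hd Hcont]] := act_cont ac Hg Hx He.
exists d; split=> // y Hy Hxy; apply/orbit_gap_lt => //; exists g; split=> //.
by apply: Hopen (act_in ac Hg Hy) _; apply: Hcont => //; rewrite msdistxx.
Qed.

Hypotheses (Hcomp : def_compact G) (Hinv : invariant_set ac A).

Lemma orbit_gap_lsc x a : ptsX x -> lt a (orbit_gap x) ->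
  exists e, pos e /\ forall y, ptsX y -> lt (dX x y) e -> lt a (orbit_gap y).
Proof.
move=> Hx Haf; have [b [Hab Hbf]] := lt_dense Haf.
suff [e [He Hfar]] : exists e, pos e /\ forall y, ptsX y -> lt (dX x y) e -> ~ orbit_near y b.
  exists e; split=> // y Hy Hxy; apply: lt_le_trans Hab _.
  by move/(orbit_gap_lt _ Hy); apply: Hfar.
(* Otherwise some g y with y arbitrarily close to x lies within b of A; at a
   cluster point g0 of these g, continuity puts g0 x within f x of A. *)
apply: NNPP => Hno.
have Hne r : pos r -> exists g, ptsG g /\ moves_near_ball x b r g.
  move=> Hr; apply: NNPP => Hnog; apply: Hno; exists r; split=> // y Hy Hxy [g Hg].
  by apply: Hnog; exists g; split; [case: Hg | exists y].
have Hmono s t g : ~ lt t s -> moves_near_ball x b s g -> moves_near_ball x b t g.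
  by move=> Hst [y [Hy [Hxy Hmv]]]; exists y; split=> //; split=> //; apply: lt_le_trans Hxy Hst.
have [g0 Hg0] := def_compact_cluster Hcomp (edefn_moves_near_ball_at b Hx) Hne Hmono.
have [Hf Hfb] := lt_sub_pos Hbf.
have Hg0G := proj1 (Hg0 _ Hf).
have [d [Hd Hcont]] := act_cont ac Hg0G Hx Hf.
have [g [Hg [Hg0g [y [Hy [Hxy [_ [a1 [Ha1 Hya1]]]]]]]]] := proj2 (Hg0 d Hd) d Hd.
apply: (@lt_irr _ (orbit_gap x)); apply/orbit_gap_lt => //.
exists g0; split=> //; exists a1; split=> //.
rewrite -Hfb; apply: (msdist_lt_tri (act_in ac Hg0G Hx) (act_in ac Hg Hy) (HAX Ha1)) Hya1.
exact: Hcont.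
Qed.

Lemma orbit_gap_continuous : continuous_on orbit_gap.
Proof.
move=> x Hx a b Ha Hb.
have [e1 [He1 H1]] := orbit_gap_lsc Hx Ha; have [e2 [He2 H2]] := orbit_gap_usc Hx Hb.
have [e [He [Hee1 Hee2]]] := pos_min He1 He2.
exists e; split=> // y Hy Hxy.
by split; [apply: H1 | apply: H2] => //; apply: lt_le_trans Hxy _.
Qed.

Lemma orbit_gap_eq0 x : ptsX x -> orbit_gap x = zero R <-> A x.
Proof.
move=> Hx; split=> [Hf0|HAx]; last first.
  apply: (le_anti (orbit_gap_ge0 Hx)) => Hpos; have [c [Hc Hcf]] := lt_dense Hpos.
  apply: (lt_asym Hcf); apply/orbit_gap_lt => //; exists (gone G); split; first exact: gone_in.
  by exists x; rewrite act1 // msdistxx.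
have Hne t : pos t -> exists g, ptsG g /\ moves_near x t g.
  by rewrite /pos -Hf0 => /(orbit_gap_lt _ Hx) [g Hg]; exists g; split=> //; case: Hg.
have Hmono s t g : ~ lt t s -> moves_near x s g -> moves_near x t g.
  by move=> Hst [Hg Hnear]; split=> //; apply: near_A_mono Hnear.
have [g0 Hg0] := def_compact_cluster Hcomp (edefn_moves_near_at Hx) Hne Hmono.
have [c Hc] := @pos_exists R.
have Hg0G := proj1 (Hg0 c Hc).
apply/(Hinv Hg0G Hx); apply: NNPP => Hout.
have [e [He Hball]] := proj2 HAcl _ (act_in ac Hg0G Hx) Hout.
have [e1 [e2 [He1 [He2 Hsum]]]] := pos_split He; subst e.
have [d [Hd Hcont]] := act_cont ac Hg0G Hx He1.
have [g [Hg [Hg0g [_ [a [Ha Hga]]]]]] := proj2 (Hg0 e2 He2) d Hd.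
apply: (Hball a (HAX Ha) _ Ha).
apply: (msdist_lt_tri (act_in ac Hg0G Hx) (act_in ac Hg Hx) (HAX Ha)) Hga.
by apply: Hcont => //; rewrite msdistxx.
Qed.

End Gap.
End OrbitDistance.

Section ConstantFunction.
Context {R : dclomStructure} (X : defMetricSpace R) (c : carrier R).

Lemma def_fun_cst : def_fun (mspts X) (fun _ => c).
Proof.
apply: def_fun_of_edefn; apply: edefn_and; first by apply: (edefn_blk (mspts_def X)); lia.
by apply: edefn_eq_cst; lia.
Qed.

Lemma continuous_on_cst : continuous_on (X := X) (fun _ => c).
Proof. by move=> x Hx a b Ha Hb; have [e He] := @pos_exists R; exists e. Qed.

End ConstantFunction.

Theorem corollary5p11 (R : dclomStructure) (G : defMetricGroup R)
  (X : defMetricSpace R) (a : defAction G X)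
  (A : ('I_(msdim X) -> carrier R) -> Prop) :
  def_compact G ->
  defn A -> closed_in A -> invariant_set a A ->
  exists f : ('I_(msdim X) -> carrier R) -> carrier R,
    def_fun (mspts X) f /\ continuous_on f /\ invariant_fun a f /\
    (forall x, mspts X x -> (f x = zero R <-> A x)).
Proof.
move=> Hcomp HA Hcl Hinv.
have [Hne|Hempty] := classic (exists x, A x).
  exists (orbit_gap a A); split; first exact: def_fun_orbit_gap.
  split; first exact: orbit_gap_continuous.
  split; first by move=> g x; apply: orbit_gap_act.
  by move=> x; apply: orbit_gap_eq0.
have [c Hc] := @pos_exists R.
exists (fun _ => c); split; first exact: def_fun_cst.
split; first exact: continuous_on_cst.
split=> // x Hx; split=> [Hc0|HAx]; last by case: Hempty; exists x.
by move: Hc; rewrite /pos Hc0 => /lt_irr.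
Qed.
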